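(* Let $\bm{Q}$ be the $m\times m$ transition rate matrix ($Q_{ij}\ge 0$ for $i\ne j$, $Q_{ii}=-\sum_{j\ne i}Q_{ij}$) of an irreducible, reversible continuous-time Markov chain with (elementwise positive) stationary distribution $\bm{\pi}_\infty$, so that $(\bm{\pi}_\infty)_iQ_{ij}=(\bm{\pi}_\infty)_jQ_{ji}$ for all $i,j$. For row vectors $\bm{p},\bm{q}\in\mathbb{R}^m$ define $\langle\bm{p},\bm{q}\rangle_{\bm{\pi}_\infty}=\sum_i (\bm{p})_i(\bm{q})_i/(\bm{\pi}_\infty)_i$, $\|\bm{p}\|^2_{\bm{\pi}_\infty}=\langle\bm{p},\bm{p}\rangle_{\bm{\pi}_\infty}$, and $\Phi^-(\bm{p})=-\tfrac12\langle\bm{p}\bm{Q},\bm{p}\rangle_{\bm{\pi}_\infty}$. Given $\bm{p}_{k-1}^{+}\in\Delta^{m-1}$ and a step size $\lambda>0$, let $$\bm{p}_k^{-}(\lambda)=\underset{\bm{p}\in\Delta^{m-1}}{\arg\inf}\;\tfrac12\|\bm{p}-\bm{p}_{k-1}^{+}\|^2_{\bm{\pi}_\infty}+\lambda\Phi^-(\bm{p}).$$ Then $\bm{p}_k^{-}(\lambda)$ is a $\lambda$-approximate prior: it coincides with the exact prior propagation $\bm{p}_{k-1}^{+}\exp(\lambda\bm{Q})$ (the solution at time $\lambda$ of $\dot{\bm{\pi}}^-=\bm{\pi}^-\bm{Q}$ started at $\bm{p}_{k-1}^+$) up to $o(\lambda)$ as $\lambda\downarrow0$.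
   Context: $\Delta^{m-1}=\{\bm{\pi}\in\mathbb{R}^m_{\ge 0}:\bm{\pi}\mathbf{1}=1\}$ is the probability simplex of row vectors ($\mathbf{1}$ the column vector of ones). In the filtering setting, $\bm{p}_{k-1}^+$ is the approximate posterior at time $(k-1)\lambda$ and $\bm{p}_k^-$ is the approximate prior at time $k\lambda$. *)

From HB Require Import structures.
From mathcomp Require Import all_boot all_order all_algebra.
From mathcomp Require Import all_classical all_reals all_analysis.
Set Implicit Arguments. Unset Strict Implicit. Unset Printing Implicit Defensive.
Import Order.TTheory GRing.Theory Num.Theory.
Import numFieldNormedType.Exports.
Local Open Scope ring_scope.

Section Defs.
Variable R : realType.
Variable m : nat.

Definition rate_matrix (Q : 'M[R]_m) : Prop :=
  (forall i j : 'I_m, i != j -> 0 <= Q i j) /\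
  (forall i : 'I_m, Q i i = - \sum_(j < m | j != i) Q i j).

Definition irreducible (Q : 'M[R]_m) : Prop :=
  forall i j : 'I_m, connect (fun a b : 'I_m => 0 < Q a b) i j.

Definition simplex (p : 'rV[R]_m) : Prop :=
  (forall i, 0 <= p 0 i) /\ \sum_(i < m) p 0 i = 1.

Definition stationary_dist (Q : 'M[R]_m) (pi : 'rV[R]_m) : Prop :=
  simplex pi /\ (forall i, 0 < pi 0 i) /\ pi *m Q = 0.

Definition reversible (Q : 'M[R]_m) (pi : 'rV[R]_m) : Prop :=
  forall i j : 'I_m, pi 0 i * Q i j = pi 0 j * Q j i.

Definition ipi (pi p q : 'rV[R]_m) : R := \sum_(i < m) p 0 i * q 0 i / pi 0 i.
Definition normpi2 (pi p : 'rV[R]_m) : R := ipi pi p p.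

Definition Phim (Q : 'M[R]_m) (pi p : 'rV[R]_m) : R := - (ipi pi (p *m Q) p) / 2.

Definition prox_obj (Q : 'M[R]_m) (pi pplus : 'rV[R]_m) (lam : R) (p : 'rV[R]_m) : R :=
  normpi2 pi (p - pplus) / 2 + lam * Phim Q pi p.

Definition is_prox_argmin (Q : 'M[R]_m) (pi pplus : 'rV[R]_m) (lam : R) (p : 'rV[R]_m) : Prop :=
  simplex p /\ forall q, simplex q -> prox_obj Q pi pplus lam p <= prox_obj Q pi pplus lam q.

End Defs.

From mathcomp Require Import all_boot all_order all_algebra.
From mathcomp Require Import all_classical all_reals all_analysis.
From mathcomp Require Import ring lra.
Set Implicit Arguments.
Unset Strict Implicit.
Import Order.TTheory GRing.Theory Num.Theory.
Import numFieldNormedType.Exports.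
Local Open Scope ring_scope.
Local Open Scope classical_set_scope.

(* The explicit Euler step [q = pplus + lam pplus Q] agrees with the exact flow
   [piexact lam] up to [o(lam)], so it suffices to show that the proximal point
   [p] is within [O(lam^2)] of [q].  For small [lam], [q] lies in the simplex,
   and comparing the objective at [p = q + d] with its value at [q] gives
   [|d|^2/2 - lam/2 <dQ, d> <= lam^2 <pplus Q Q, d>] in the [pi]-geometry.
   Reversibility turns [-<dQ, d>] into a Dirichlet form, which is nonnegative,
   and [2 <u, v> <= |u|^2 + |v|^2] then gives [|d| <= 2 lam^2 |pplus Q Q|]. *)

Lemma is_derive1_quotient_cvg (R : numFieldType) (V : normedModType R)
    (f : R -> V) (x : R) (df : V) :
  is_derive x 1 f df -> h^-1 *: (f (h + x) - f x) @[h --> 0^'] --> df.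
Proof.
case=> fx <-; rewrite -derive1E /derive1.
suff -> : (fun h => h^-1 *: (f (h + x) - f x)) =
          (fun h => h^-1 *: ((f \o shift x) h%:A - f x)) by exact: fx.
by apply/funext => h; rewrite /= [h%:A]mulr1.
Qed.

Lemma cvg_mulr_at_right0 (R : realType) (c : R) : (fun t => t * c) @ 0^'+ --> 0.
Proof.
apply: cvg_at_right_filter.
by have := @mulrr_continuous _ c 0; rewrite /continuous_at /= mul0r.
Qed.

Lemma cvg0_norm_le_mulr (R : realType) (V : normedModType R) (f : R -> V) (c : R) :
  (\forall t \near 0^'+, `|f t| <= t * c) -> f @ 0^'+ --> 0.
Proof.
move=> f_le; apply: norm_cvg0.
apply: (@squeeze_cvgr _ _ _ _ (cst 0) (fun t => t * c)); last first.
- exact: cvg_mulr_at_right0.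
- exact: cvg_cst.
- by near=> t; rewrite normr_ge0 /=; near: t.
Unshelve. all: by end_near.
Qed.

Lemma simplex_le1 (R : realType) (m : nat) (p : 'rV[R]_m) i :
  simplex p -> p 0 i <= 1.
Proof. by case=> p_ge0 <-; rewrite (bigD1 i) //= lerDl sumr_ge0. Qed.

Section WeightedInnerProduct.
Variables (R : realType) (m : nat) (pi : 'rV[R]_m).
Hypothesis pi_gt0 : forall i, 0 < pi 0 i.

Lemma ipiC p q : ipi pi p q = ipi pi q p.
Proof. by rewrite /ipi; apply: eq_bigr => i _; ring. Qed.

Lemma ipiDl p1 p2 q : ipi pi (p1 + p2) q = ipi pi p1 q + ipi pi p2 q.
Proof. by rewrite /ipi -big_split /=; apply: eq_bigr => i _; rewrite !mxE; ring. Qed.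

Lemma ipiZl c p q : ipi pi (c *: p) q = c * ipi pi p q.
Proof. by rewrite /ipi mulr_sumr; apply: eq_bigr => i _; rewrite !mxE; ring. Qed.

Lemma ipiDr p q1 q2 : ipi pi p (q1 + q2) = ipi pi p q1 + ipi pi p q2.
Proof. by rewrite ipiC ipiDl !(ipiC _ p). Qed.

Lemma ipiZr c p q : ipi pi p (c *: q) = c * ipi pi p q.
Proof. by rewrite ipiC ipiZl ipiC. Qed.

Lemma normpi2_ge0 p : 0 <= normpi2 pi p.
Proof. by apply: sumr_ge0 => i _; rewrite -expr2 divr_ge0 ?sqr_ge0 ?ltW. Qed.

Lemma normpi2D p q :
  normpi2 pi (p + q) = normpi2 pi p + 2 * ipi pi p q + normpi2 pi q.
Proof. by rewrite /normpi2 ipiDl !ipiDr (ipiC q p); ring. Qed.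

Lemma normpi2Z c p : normpi2 pi (c *: p) = c ^+ 2 * normpi2 pi p.
Proof. by rewrite /normpi2 ipiZl ipiZr; ring. Qed.

Lemma ipi_le_normpi2 p q : 2 * ipi pi p q <= normpi2 pi p + normpi2 pi q.
Proof.
have := normpi2_ge0 (p + (-1) *: q).
by rewrite normpi2D normpi2Z ipiZr; lra.
Qed.

Lemma normr_le_sqrt_normpi2 p :
  (forall i, pi 0 i <= 1) -> `|p| <= Num.sqrt (normpi2 pi p).
Proof.
move=> pi_le1; rewrite [`|p|]mx_normrE; apply: bigmax_le => [|[i j] _ /=].
  exact: sqrtr_ge0.
rewrite ord1 -sqrtr_sqr ler_wsqrtr //.
apply: le_trans (_ : p 0 j * p 0 j / pi 0 j <= _).
  by rewrite -expr2 ler_peMr ?sqr_ge0 // invf_ge1.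
rewrite /normpi2 /ipi (bigD1 j) //= lerDl.
by apply: sumr_ge0 => k _; rewrite -expr2 divr_ge0 ?sqr_ge0 ?ltW.
Qed.

End WeightedInnerProduct.

Section RateMatrix.
Variables (R : realType) (m : nat) (Q : 'M[R]_m).
Hypothesis Q_rate : rate_matrix Q.

Definition euler_step (p : 'rV[R]_m) (lam : R) : 'rV[R]_m := p + lam *: (p *m Q).

Lemma rate_matrix_row_sum0 i : \sum_j Q i j = 0.
Proof. by rewrite (bigD1 i) //= {1}(proj2 Q_rate i) addNr. Qed.

Lemma simplex_euler_step p lam :
  simplex p -> 0 <= lam -> (forall i, lam * - Q i i <= 1) ->
  simplex (euler_step p lam).
Proof.
move=> [p_ge0 p_sum] lam_ge0 lam_small; split=> [i|].
  rewrite !mxE (bigD1 i) //= mulrDr addrA.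
  have off_diag : 0 <= lam * \sum_(j < m | j != i) p 0 j * Q j i.
    apply: mulr_ge0 => //; apply: sumr_ge0 => j ji.
    by rewrite mulr_ge0 ?p_ge0 ?(proj1 Q_rate).
  have diag : 0 <= p 0 i + lam * (p 0 i * Q i i).
    have := lam_small i; have := p_ge0 i; nra.
  exact: addr_ge0.
under eq_bigr do rewrite !mxE.
rewrite big_split /= p_sum -mulr_sumr exchange_big /= big1 ?mulr0 ?addr0 //.
by move=> j _; rewrite -mulr_sumr rate_matrix_row_sum0 mulr0.
Qed.

Lemma simplex_euler_step_near0 p :
  simplex p -> \forall t \near 0^'+, simplex (euler_step p t).
Proof.
move=> p_simplex.
have small : \forall t \near 0^'+, forall i, t * - Q i i <= 1.
  apply: filter_forall => i; near do apply: ltW.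
  exact: (cvgr_lt 0 (cvg_mulr_at_right0 (- Q i i))).
near=> t.
have t_ge0 : 0 <= t by apply: ltW; near: t; exact: nbhs_right_gt.
by apply: (simplex_euler_step p_simplex t_ge0); near: t; exact: small.
Unshelve. all: by end_near.
Qed.

Variable pi : 'rV[R]_m.
Hypothesis pi_gt0 : forall i, 0 < pi 0 i.
Hypothesis Q_rev : reversible Q pi.

Lemma ipi_mulmxC u v : ipi pi (u *m Q) v = ipi pi (v *m Q) u.
Proof.
rewrite /ipi.
under eq_bigr do rewrite mxE !big_distrl /=.
under [RHS]eq_bigr do rewrite mxE !big_distrl /=.
rewrite [RHS]exchange_big /=; apply: eq_bigr => i _; apply: eq_bigr => j _.
have pi_neq0 k : pi 0 k != 0 by exact: lt0r_neq0.
have -> : Q j i = pi 0 i * Q i j / pi 0 j by rewrite Q_rev; field.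
by field; rewrite !pi_neq0.
Qed.

Lemma ipi_mulmx_selfD u v :
  ipi pi ((u + v) *m Q) (u + v) =
  ipi pi (u *m Q) u + 2 * ipi pi (u *m Q) v + ipi pi (v *m Q) v.
Proof. by rewrite mulmxDl !ipiDl !ipiDr (ipi_mulmxC v u); ring. Qed.

(* With x = p / pi, detailed balance and zero row sums give
   -2 <pQ, p> = sum_(i,j) pi_i Q_ij (x_i - x_j)^2. *)
Lemma ipi_mulmx_self_le0 p : ipi pi (p *m Q) p <= 0.
Proof.
pose x i := p 0 i / pi 0 i.
have row0 i c : \sum_j c * Q i j = 0 by rewrite -mulr_sumr rate_matrix_row_sum0 mulr0.
have pQp : ipi pi (p *m Q) p = \sum_i \sum_j pi 0 i * Q i j * x i * x j.
  rewrite /ipi; under eq_bigr do rewrite mxE !big_distrl /=.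
  rewrite exchange_big; apply: eq_bigr => i _; apply: eq_bigr => j _.
  by rewrite /x; field; rewrite !lt0r_neq0.
have sq_i : \sum_i \sum_j pi 0 i * Q i j * x i ^+ 2 = 0.
  apply: big1 => i _; rewrite -[RHS](row0 i (pi 0 i * x i ^+ 2)).
  by apply: eq_bigr => j _; ring.
have sq_j : \sum_i \sum_j pi 0 i * Q i j * x j ^+ 2 = 0.
  rewrite exchange_big; apply: big1 => j _; rewrite -[RHS](row0 j (pi 0 j * x j ^+ 2)).
  by apply: eq_bigr => i _; rewrite [pi 0 i * _]Q_rev; ring.
have : 0 <= \sum_i \sum_j pi 0 i * Q i j * (x i - x j) ^+ 2.
  apply: sumr_ge0 => i _; apply: sumr_ge0 => j _.
  have [->|ij] := eqVneq i j; first by rewrite subrr expr0n mulr0.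
  by rewrite mulr_ge0 ?sqr_ge0 // mulr_ge0 ?(ltW (pi_gt0 i)) ?(proj1 Q_rate).
have -> : \sum_i \sum_j pi 0 i * Q i j * (x i - x j) ^+ 2 =
    \sum_i \sum_j pi 0 i * Q i j * x i ^+ 2 + \sum_i \sum_j pi 0 i * Q i j * x j ^+ 2
    + (-2) * \sum_i \sum_j pi 0 i * Q i j * x i * x j.
  rewrite mulr_sumr -!big_split /=; apply: eq_bigr => i _.
  by rewrite mulr_sumr -!big_split /=; apply: eq_bigr => j _; ring.
by rewrite sq_i sq_j pQp; lra.
Qed.

End RateMatrix.

Section ProximalStep.
Variables (R : realType) (m : nat) (Q : 'M[R]_m) (pi pplus : 'rV[R]_m).
Hypothesis Q_rate : rate_matrix Q.
Hypothesis pi_gt0 : forall i, 0 < pi 0 i.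
Hypothesis Q_rev : reversible Q pi.

(* The Euler step is the explicit gradient step [pplus - lam grad Phim(pplus)]
   in the [pi]-geometry, so the terms linear in [d] cancel up to order [lam^2]. *)
Lemma prox_obj_euler_stepD lam d :
  prox_obj Q pi pplus lam (euler_step Q pplus lam + d) =
  prox_obj Q pi pplus lam (euler_step Q pplus lam) + normpi2 pi d / 2
  - lam / 2 * ipi pi (d *m Q) d - lam ^+ 2 * ipi pi (pplus *m Q *m Q) d.
Proof.
rewrite /prox_obj /Phim /euler_step.
set a := pplus *m Q; set q := pplus + lam *: a.
have -> : q + d - pplus = lam *: a + d by rewrite /q addrAC [pplus + _]addrC addrK.
have -> : q - pplus = lam *: a by rewrite /q [pplus + _]addrC addrK.
have qQ : q *m Q = a + lam *: (a *m Q) by rewrite mulmxDl -scalemxAl.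
rewrite ipi_mulmx_selfD // normpi2D normpi2Z qQ !ipiDl !ipiZl.
by field.
Qed.

Lemma prox_argmin_euler_step_dist lam p :
  0 < lam -> is_prox_argmin Q pi pplus lam p -> simplex (euler_step Q pplus lam) ->
  normpi2 pi (p - euler_step Q pplus lam) <=
    (2 * lam ^+ 2) ^+ 2 * normpi2 pi (pplus *m Q *m Q).
Proof.
move=> lam_gt0 [_ p_min] /p_min.
set q := euler_step Q pplus lam; set d := p - q; set b := pplus *m Q *m Q.
have -> : p = q + d by rewrite /d addrC subrK.
rewrite prox_obj_euler_stepD => obj_le.
have dirichlet := ipi_mulmx_self_le0 Q_rate pi_gt0 Q_rev d.
have amgm := ipi_le_normpi2 pi_gt0 (lam ^+ 2 *: b) (2^-1 *: d).
rewrite ipiZl ipiZr !normpi2Z in amgm.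
have := normpi2_ge0 pi_gt0 d; have := normpi2_ge0 pi_gt0 b.
nra.
Qed.

Lemma prox_argmin_euler_step_normr_le lam p :
  (forall i, pi 0 i <= 1) -> 0 < lam -> is_prox_argmin Q pi pplus lam p ->
  simplex (euler_step Q pplus lam) ->
  `|lam^-1 *: (p - euler_step Q pplus lam)| <=
    lam * (2 * Num.sqrt (normpi2 pi (pplus *m Q *m Q))).
Proof.
move=> pi_le1 lam_gt0 p_min euler_simplex.
have dist := prox_argmin_euler_step_dist lam_gt0 p_min euler_simplex.
rewrite normrZ gtr0_norm ?invr_gt0 // ler_pdivrMl // mulrA.
apply: le_trans (normr_le_sqrt_normpi2 pi_gt0 _ pi_le1) _.
apply: le_trans (ler_wsqrtr dist) _.
by rewrite sqrtrM ?sqr_ge0 // sqrtr_sqr ger0_norm ?mulr_ge0 ?sqr_ge0 //; nra.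
Qed.

End ProximalStep.

Theorem theorem3 (R : realType) (m : nat) (Q : 'M[R]_m) (piinf pplus : 'rV[R]_m)
  (hQ : rate_matrix Q) (hirr : irreducible Q)
  (hstat : stationary_dist Q piinf) (hrev : reversible Q piinf)
  (hp : simplex pplus)
  (pminus : R -> 'rV[R]_m)
  (hmin : forall lam : R, 0 < lam -> is_prox_argmin Q piinf pplus lam (pminus lam))
  (piexact : R -> 'rV[R]_m)
  (h0 : piexact 0 = pplus)
  (hode : forall t : R, is_derive t 1 piexact (piexact t *m Q)) :
  (fun lam : R => lam^-1 *: (pminus lam - piexact lam)) @ 0^'+ --> (0 : 'rV[R]_m).
Proof.
have [piinf_simplex [piinf_gt0 _]] := hstat.
have prox_close : \forall t \near 0^'+, `|t^-1 *: (pminus t - euler_step Q pplus t)|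
    <= t * (2 * Num.sqrt (normpi2 piinf (pplus *m Q *m Q))).
  near=> t; have t_gt0 : 0 < t by near: t; exact: nbhs_right_gt.
  have pi_le1 i : piinf 0 i <= 1 by exact: simplex_le1.
  have euler_simplex : simplex (euler_step Q pplus t).
    by near: t; exact: simplex_euler_step_near0.
  exact (prox_argmin_euler_step_normr_le hQ piinf_gt0 hrev pi_le1 t_gt0
           (hmin t t_gt0) euler_simplex).
have exact_close :
    t^-1 *: (piexact t - pplus) - pplus *m Q @[t --> 0^'+] --> (0 : 'rV[R]_m).
  apply: cvg_dnbhs_at_right; apply/subr_cvg0.
  have := is_derive1_quotient_cvg (hode 0).
  by rewrite h0; under eq_fun do rewrite addr0.
have split_cvg : t^-1 *: (pminus t - euler_step Q pplus t)
    - (t^-1 *: (piexact t - pplus) - pplus *m Q) @[t --> 0^'+] --> (0 : 'rV[R]_m).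
  rewrite -(subr0 (0 : 'rV[R]_m)).
  exact: cvgB (cvg0_norm_le_mulr prox_close) exact_close.
apply: cvg_trans _ split_cvg; apply: near_eq_cvg; near=> t.
have t_neq0 : t != 0 by rewrite gt_eqF //; near: t; exact: nbhs_right_gt.
by apply/rowP => j; rewrite /euler_step !mxE; field.
Unshelve. all: by end_near.
Qed.
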